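(* Let $(X,d)$ be a finite metric space whose distances are integers in $[0,\frac{16k}{\varepsilon}]$, for a positive integer $k$ and $\varepsilon>0$. For a nonempty $S\subseteq X$ and $t\in[k]$, let $(\mathcal{C}_1,\dots,\mathcal{C}_t)$ be the output of $\mathtt{detRecMSD}(S,t)$ and let $\operatorname{opt}_i(S)$ denote the cost of an optimal $i$-clustering of $S$. Then $\operatorname{cost}(\mathcal{C}_r)=\operatorname{opt}_r(S)$ for every $r\in\{1,\dots,t\}$.
   Context: An $i$-clustering of $S$ is a collection of at most $i$ subsets whose union is $S$; its cost is the sum of the diameters $\operatorname{diam}(C)=\max_{p,q\in C}d(p,q)$ of its sets. $\operatorname{Ball}(x,R)=\{z\in X:d(x,z)\le R\}$. The deterministic procedure $\mathtt{detRecMSD}(S,t)$ is: set $\mathcal{C}_i\gets\{S\}$ for all $i\in\{1,\dots,t\}$; if $t=1$ or $|S|=1$ return $(\mathcal{C}_1,\dots,\mathcal{C}_t)$. Otherwise let $x,y\in S$ with $d(x,y)=\operatorname{diam}(S)$; for each integer $R=0,1,\dots,\operatorname{diam}(S)-1$: let $S_1=S\cap\operatorname{Ball}(x,R)$, $S_2=S\setminus\operatorname{Ball}(x,R)$, compute $\mathcal{A}=\mathtt{detRecMSD}(S_1,t-1)$ and $\mathcal{B}=\mathtt{detRecMSD}(S_2,t-1)$, and for all $i,j\in\{1,\dots,t-1\}$ with $i+j\le t$, if $\operatorname{cost}(\mathcal{A}_i\cup\mathcal{B}_j)<\operatorname{cost}(\mathcal{C}_{i+j})$ set $\mathcal{C}_{i+j}\gets\mathcal{A}_i\cup\mathcal{B}_j$.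 Finally return $(\mathcal{C}_1,\dots,\mathcal{C}_t)$. *)

From mathcomp Require Import all_boot all_order all_algebra.
Set Implicit Arguments. Unset Strict Implicit. Unset Printing Implicit Defensive.

Section MSD.
Variables (X : finType) (d : X -> X -> nat).

Definition is_metric : Prop :=
  [/\ forall x y, d x y = 0 <-> x = y,
      forall x y, d x y = d y x &
      forall x y z, d x z <= d x y + d y z].

Definition diam (C : {set X}) : nat := \max_(p in C) \max_(q in C) d p q.

Definition Ball (x : X) (R : nat) : {set X} := [set z | d x z <= R].

Definition cost (P : {set {set X}}) : nat := \sum_(C in P) diam C.

Definition is_clustering (i : nat) (S : {set X}) (P : {set {set X}}) : bool :=
  (#|P| <= i) && (cover P == S).

(* The default value diam S
   of the fold is the cost of the 1-clustering {S}, hence an upper bound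
   whenever i >= 1, so it does not affect the minimum for i >= 1. *)
Definition opt (i : nat) (S : {set X}) : nat :=
  \big[minn/diam S]_(P : {set {set X}} | is_clustering i S P) cost P.

(* pick S is the point x of the procedure: a point of S that is an endpoint
   of a diametral pair of S.  Any such choice function is allowed. *)
Definition diam_endpoint_choice (pick : {set X} -> X) : Prop :=
  forall S : {set X}, S != set0 ->
    pick S \in S /\ exists2 y, y \in S & d (pick S) y = diam S.

Variable pick : {set X} -> X.

Definition upd (A B C : nat -> {set {set X}}) (ij : nat * nat)
  : nat -> {set {set X}} :=
  let: (i, j) := ij in
  if cost (A i :|: B j) < cost (C (i + j))
  then (fun n => if n == i + j then A i :|: B j else C n)
  else C.

(* detRecMSD(S,t): returns the function i |-> C_i (meaningful for 1<=i<=t). *)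
Fixpoint detRecMSD (S : {set X}) (t : nat) {struct t} : nat -> {set {set X}} :=
  match t with
  | 0 => fun _ => [set S]
  | t'.+1 =>
    if (t' == 0) || (#|S| == 1) then fun _ => [set S]
    else
      let x := pick S in
      foldl
        (fun C R =>
           let S1 := S :&: Ball x R in
           let S2 := S :\: Ball x R in
           let A := detRecMSD S1 t' in
           let B := detRecMSD S2 t' in
           foldl (upd A B) C
             [seq ij <- [seq (i, j) | i <- iota 1 t', j <- iota 1 t']
                | ij.1 + ij.2 <= t'.+1])
        (fun _ => [set S])
        (iota 0 (diam S))
  end.

End MSD.

From mathcomp Require Import all_boot all_order all_algebra.
From mathcomp Require Import zify.
Import Order.TTheory GRing.Theory Num.Theory.

(* Let x, y be a diametral pair of S and let P be an r-clustering of S cheaper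
   than diam S.  A cluster C of P is cut by the ball of radius R around x for
   at most diam C integer radii R (triangle inequality), so fewer than
   diam S = d x y radii R < diam S are cut by some cluster.  For an uncut R,
   P splits into a clustering of S :&: Ball x R and one of S :\: Ball x R,
   both nonempty (they contain x and y), with at most r clusters in total and
   the same cost.  The procedure tries every such R and every split i + j = r
   of the cluster budget, so by induction on t it finds an optimal
   r-clustering. *)

Lemma foldl_ind {T : Type} {E : eqType} (P : T -> Prop) (f : T -> E -> T)
    (l : seq E) (z : T) :
  P z -> (forall s e, e \in l -> P s -> P (f s e)) -> P (foldl f z l).
Proof.
elim: l z => //= e l IH z Pz Pf; apply: IH => [|s e' e'l]; first exact: Pf (mem_head _ _) Pz.
by apply: Pf; rewrite inE e'l orbT.
Qed.

Section PointwiseNonincreasingFold.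
Context {T : Type} {E : eqType} {w : T -> nat} {f : (nat -> T) -> E -> nat -> T}.
Hypothesis f_nonincr : forall C e n, w (f C e n) <= w (C n).

Lemma foldl_nonincr l C n : w (foldl f C l n) <= w (C n).
Proof.
apply: (foldl_ind (fun C' => forall n, w (C' n) <= w (C n))) => // C' e _ C'le m.
exact: leq_trans (f_nonincr _ _ _) (C'le m).
Qed.

Lemma foldl_le_step l C e m c :
  e \in l -> (forall C', w (f C' e m) <= c) -> w (foldl f C l m) <= c.
Proof.
case/splitPr=> l1 l2 fe; rewrite foldl_cat /=.
exact: leq_trans (foldl_nonincr _ _ _) (fe _).
Qed.

End PointwiseNonincreasingFold.

Lemma big_minn_le (I : eqType) (r : seq I) (P : pred I) (F : I -> nat) a i :
  i \in r -> P i -> \big[minn/a]_(j <- r | P j) F j <= F i.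
Proof.
elim: r => // j r IH; rewrite inE big_cons => /predU1P[<- -> | ir Pi].
  exact: geq_minl.
by case: (P j); [apply: leq_trans (geq_minr _ _) _|]; apply: IH.
Qed.

Section Clustering.
Context {X : finType} (d : X -> X -> nat).
Implicit Types (S C : {set X}) (P : {set {set X}}).

Lemma leq_diam C p q : p \in C -> q \in C -> d p q <= diam d C.
Proof.
move=> pC qC; rewrite /diam; apply: leq_trans (leq_bigmax_cond _ pC).
exact: leq_bigmax_cond.
Qed.

Lemma diam_set0 : diam d set0 = 0.
Proof. by rewrite /diam big_set0. Qed.

Lemma diam_set1 p : d p p = 0 -> diam d [set p] = 0.
Proof. by move=> dpp; rewrite /diam !big_set1. Qed.

Lemma cost_set1 S : cost d [set S] = diam d S.
Proof. by rewrite /cost big_set1. Qed.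

Lemma cost_setU P1 P2 : cost d (P1 :|: P2) <= cost d P1 + cost d P2.
Proof.
rewrite /cost (big_setID P1) /= setUK leq_add2l.
rewrite setDUl setDv set0U [X in _ <= X](big_setID (P2 :\: P1)) /=.
by rewrite (setIidPr (subsetDl _ _)) leq_addr.
Qed.

Lemma card_gt0_cover P : cover P != set0 -> 0 < #|P|.
Proof. by rewrite card_gt0; apply: contraNneq => ->; rewrite /cover big_set0. Qed.

Lemma clustering_set1 i S : 0 < i -> is_clustering i S [set S].
Proof. by move=> i0; rewrite /is_clustering cards1 cover1 eqxx andbT. Qed.

Lemma clusteringU {i j S1 S2 P1 P2} :
  is_clustering i S1 P1 -> is_clustering j S2 P2 ->
  is_clustering (i + j) (S1 :|: S2) (P1 :|: P2).
Proof.
case/andP=> P1i /eqP <-; case/andP=> P2j /eqP <-; apply/andP; split.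
  exact: leq_trans (leq_card_setU _ _).1 (leq_add P1i P2j).
by rewrite /cover bigcup_setU.
Qed.

Lemma diam_le_cost_clustering1 S P : is_clustering 1 S P -> diam d S <= cost d P.
Proof.
case/andP; rewrite leq_eqVlt ltnS leqn0 cards_eq0 => /orP[/cards1P[C ->] | /eqP ->].
  by rewrite cover1 cost_set1 => /eqP ->.
by rewrite /cover big_set0 => /eqP <-; rewrite diam_set0.
Qed.

Lemma opt_eq_cost {i S P0} :
  0 < i -> is_clustering i S P0 ->
  (forall P, is_clustering i S P -> cost d P0 <= cost d P) ->
  opt d i S = cost d P0.
Proof.
move=> i0 clP0 P0min; apply/eqP; rewrite eqn_leq; apply/andP; split.
  exact: big_minn_le (mem_index_enum _) clP0.
apply: (big_ind (fun v => cost d P0 <= v)) => [|u v P0u P0v|P clP].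
- by rewrite -cost_set1; apply/P0min/clustering_set1.
- by rewrite leq_min P0u P0v.
- exact: P0min.
Qed.

Section UncutSplit.
Variables (P : {set {set X}}) (B : {set X}).
Hypothesis uncut : {in P, forall C, {in C &, forall p q, p \in B -> q \in B}}.

Lemma cover_setI_powerset_uncut : cover (P :&: powerset B) = cover P :&: B.
Proof.
apply/eqP; rewrite eqEsubset setI_powerset cover_setI /=.
apply/subsetP=> z /setIP[/bigcupP[C CP zC] zB]; apply/bigcupP; exists C => //.
by rewrite !inE CP; apply/subsetP=> q qC; apply: (uncut C CP z q).
Qed.

Lemma cover_setD_powerset_uncut : cover (P :\: powerset B) = cover P :\: B.
Proof.
apply/setP=> z; apply/bigcupP/setDP => [[C] | [/bigcupP[C CP zC] zB]].
  rewrite !inE => /andP[/subsetPn[q qC qB] CP] zC; split; last first.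
    by apply: contra qB; apply: (uncut C CP z q).
  by apply/bigcupP; exists C.
by exists C => //; rewrite !inE CP andbT; apply/subsetPn; exists z.
Qed.

End UncutSplit.

Section BallCut.
Hypothesis dxx : forall x, d x x = 0.
Hypothesis d_triangle : forall x y z, d x z <= d x y + d y z.

Definition cut_radii x D C : {set 'I_D} :=
  [set R : 'I_D | [exists p in C, exists q in C, (d x p <= R) && (R < d x q)]].

Lemma card_cut_radii x D C : #|cut_radii x D C| <= diam d C.
Proof.
have [-> | [p0 p0C]] := set_0Vmem C.
  rewrite (_ : cut_radii _ _ _ = set0) ?cards0 //.
  by apply/setP=> R; rewrite !inE; apply/existsP=> -[p]; rewrite inE.
have [pm pmC pm_min] := arg_minnP (d x) p0C.
have [pM pMC pM_max] := arg_maxnP (d x) p0C.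
have cut_in_iota : {subset map val (enum (cut_radii x D C))
                     <= iota (d x pm) (d x pM - d x pm)}.
  move=> n /mapP[R]; rewrite mem_enum inE => /existsP[p /andP[pC]].
  case/existsP=> q /andP[qC /andP[pR Rq]] ->.
  have := pm_min p pC; have := pM_max q qC; rewrite mem_iota /=; lia.
rewrite cardE -(size_map val); apply: leq_trans (uniq_leq_size _ cut_in_iota) _.
  by rewrite (map_inj_uniq val_inj) enum_uniq.
rewrite size_iota leq_subLR; apply: leq_trans (d_triangle x pm pM) _.
by rewrite leq_add2l leq_diam.
Qed.

Lemma exists_uncut_radius x P D :
  cost d P < D ->
  exists2 R, R < D & {in P, forall C, {in C &, forall p q,
                        p \in Ball d x R -> q \in Ball d x R}}.
Proof.
move=> costPD; set U := \bigcup_(C in P) cut_radii x D C.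
have cardU : #|U| < D.
  apply: leq_ltn_trans costPD.
  apply: (@leq_trans (\sum_(C in P) #|cut_radii x D C|)).
    2: exact: leq_sum (fun C _ => card_cut_radii x D C).
  rewrite /U; elim/big_rec2: _ => [|C n V _ Vn]; first by rewrite cards0.
  exact: leq_trans (leq_card_setU _ _).1 (leq_add (leqnn _) Vn).
have /subsetPn[R _ RU] : ~~ ([set: 'I_D] \subset U).
  by apply: contraTN cardU => /subset_leq_card; rewrite cardsT card_ord -leqNgt.
exists R => // C CP p q pC qC; rewrite !inE => pR; rewrite leqNgt.
apply: contra RU => Rq; apply/bigcupP; exists C => //; rewrite inE.
by apply/existsP; exists p; rewrite pC; apply/existsP; exists q; rewrite qC pR.
Qed.

Lemma split_clustering_by_ball {S r P x y} :
  x \in S -> y \in S -> d x y = diam d S ->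
  is_clustering r S P -> cost d P < diam d S ->
  exists R i j, [/\ R < diam d S, 0 < i, 0 < j & i + j = r] /\
    exists P1 P2, [/\ is_clustering i (S :&: Ball d x R) P1,
                      is_clustering j (S :\: Ball d x R) P2 &
                      cost d P1 + cost d P2 <= cost d P].
Proof.
move=> xS yS dxy /andP[Pr /eqP coverP] costP.
have [R RS uncut] := exists_uncut_radius x P _ costP.
set B := Ball d x R; set P1 := P :&: powerset B; set P2 := P :\: powerset B.
have cover1 : cover P1 = S :&: B by rewrite (cover_setI_powerset_uncut _ _ uncut) coverP.
have cover2 : cover P2 = S :\: B by rewrite (cover_setD_powerset_uncut _ _ uncut) coverP.
have P1_gt0 : 0 < #|P1|.
  by apply: card_gt0_cover; rewrite cover1; apply/set0Pn; exists x; rewrite !inE xS dxx.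
have P2_gt0 : 0 < #|P2|.
  apply: card_gt0_cover; rewrite cover2; apply/set0Pn; exists y.
  by rewrite !inE yS dxy -ltnNge RS.
have cardP : #|P1| + #|P2| = #|P| := cardsID _ _.
exists R, (r - #|P2|), #|P2|; split; first by split => //; lia.
exists P1, P2; split; rewrite /is_clustering ?cover1 ?cover2 ?eqxx ?andbT //; first lia.
by rewrite /cost [X in _ <= X](big_setID (powerset B)).
Qed.

End BallCut.
End Clustering.

Definition split_pairs t :=
  [seq ij <- [seq (i, j) | i <- iota 1 t, j <- iota 1 t] | ij.1 + ij.2 <= t.+1].

Lemma mem_split_pairs t i j :
  ((i, j) \in split_pairs t) = [&& 0 < i <= t, 0 < j <= t & i + j <= t.+1].
Proof.
rewrite mem_filter /=; apply/andP/and3P => [[ij] | [it jt ij]].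
  case/allpairsP=> -[a b] /= [ai bj [ia jb]].
  by move: ai bj; rewrite -ia -jb !mem_iota; split; lia.
by split => //; apply: allpairs_f; rewrite mem_iota; lia.
Qed.

Section Update.
Context {X : finType} (d : X -> X -> nat) (A B : nat -> {set {set X}}).

Lemma updE C i j n :
  upd d A B C (i, j) n =
  if (cost d (A i :|: B j) < cost d (C (i + j))) && (n == i + j)
  then A i :|: B j else C n.
Proof. by rewrite /upd; case: ifP => //= _; case: ifP => // /eqP ->. Qed.

Lemma upd_nonincr C ij n : cost d (upd d A B C ij n) <= cost d (C n).
Proof. by case: ij => i j; rewrite updE; case: ifP => // /andP[/ltnW + /eqP ->]. Qed.

Lemma upd_le_candidate C i j :
  cost d (upd d A B C (i, j) (i + j)) <= cost d (A i :|: B j).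
Proof. by rewrite updE eqxx andbT; case: ltnP. Qed.

Lemma upd_ind (Q : nat -> {set {set X}} -> Prop) C i j :
  (forall n, Q n (C n)) -> Q (i + j) (A i :|: B j) ->
  forall n, Q n (upd d A B C (i, j) n).
Proof. by move=> QC Qij n; rewrite updE; case: ifP => // /andP[_ /eqP ->]. Qed.

Lemma foldl_upd_nonincr l C n : cost d (foldl (upd d A B) C l n) <= cost d (C n).
Proof. exact: foldl_nonincr upd_nonincr l C n. Qed.

End Update.

Section DetRecMSD.
Context {X : finType} {d : X -> X -> nat} {pick : {set X} -> X}.
Implicit Types (S : {set X}) (P : {set {set X}}).

Local Notation inner S R t := (detRecMSD d pick (S :&: Ball d (pick S) R) t).
Local Notation outer S R t := (detRecMSD d pick (S :\: Ball d (pick S) R) t).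

Lemma detRecMSD_base S t :
  (t == 0) || (#|S| == 1) -> detRecMSD d pick S t.+1 = fun=> [set S].
Proof. by move=> /= ->. Qed.

Lemma detRecMSD_rec S t :
  t != 0 -> #|S| != 1 ->
  detRecMSD d pick S t.+1 =
  foldl (fun C R => foldl (upd d (inner S R t) (outer S R t)) C (split_pairs t))
        (fun=> [set S]) (iota 0 (diam d S)).
Proof. by move=> /negbTE /= -> /negbTE ->. Qed.

Lemma cost_detRecMSD_le_diam S t n : cost d (detRecMSD d pick S t n) <= diam d S.
Proof.
case: t => [|t]; first by rewrite cost_set1.
have [base | ] := boolP ((t == 0) || (#|S| == 1)); first by rewrite detRecMSD_base ?cost_set1.
rewrite negb_or => /andP[t0 S1]; rewrite detRecMSD_rec // -(cost_set1 d S).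
exact: foldl_nonincr (fun C R => foldl_upd_nonincr _ _ _ _ C) _ _ _.
Qed.

Lemma cost_detRecMSD_le_split {S t R i j} :
  t != 0 -> #|S| != 1 -> R < diam d S -> (i, j) \in split_pairs t ->
  cost d (detRecMSD d pick S t.+1 (i + j)) <= cost d (inner S R t i :|: outer S R t j).
Proof.
move=> t0 S1 RS ij; rewrite detRecMSD_rec //.
apply: (foldl_le_step (fun C R => foldl_upd_nonincr _ _ _ _ C) _ _ R).
  by rewrite mem_iota leq0n add0n.
move=> C; apply: foldl_le_step ij _ => [|C']; first exact: upd_nonincr.
exact: upd_le_candidate.
Qed.

Lemma detRecMSD_rec_ind {S t} (Q : nat -> {set {set X}} -> Prop) :
  t != 0 -> #|S| != 1 -> (forall n, Q n [set S]) ->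
  (forall R i j, R < diam d S -> (i, j) \in split_pairs t ->
     Q (i + j) (inner S R t i :|: outer S R t j)) ->
  forall n, Q n (detRecMSD d pick S t.+1 n).
Proof.
move=> t0 S1 QS Qsplit; rewrite detRecMSD_rec //.
apply: (foldl_ind (fun C => forall n, Q n (C n))) => // C R + QC.
rewrite mem_iota => /= RS; apply: (foldl_ind (fun C => forall n, Q n (C n))) => //.
by move=> C' [i j] ij QC'; apply: upd_ind => //; apply: Qsplit.
Qed.

Lemma detRecMSD_clustering {t S r} :
  0 < r <= t -> is_clustering r S (detRecMSD d pick S t r).
Proof.
elim: t S r => [|t IH] S r /andP[r0 rt]; first by move: (leq_trans r0 rt).
have [base | ] := boolP ((t == 0) || (#|S| == 1)).
  by rewrite detRecMSD_base // clustering_set1.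
rewrite negb_or => /andP[t0 S1].
apply: (detRecMSD_rec_ind (fun n C => 0 < n -> is_clustering n S C) t0 S1 _ _ r r0).
  by move=> n; apply: clustering_set1.
move=> R i j _; rewrite mem_split_pairs => /and3P[it jt _] _.
have cl1 := IH (S :&: Ball d (pick S) R) _ it.
have cl2 := IH (S :\: Ball d (pick S) R) _ jt.
by have := clusteringU cl1 cl2; rewrite setID.
Qed.

Hypothesis d_metric : is_metric d.
Hypothesis pickP : diam_endpoint_choice d pick.

Lemma detRecMSD_minimal {t S r} P :
  0 < r <= t -> is_clustering r S P -> cost d (detRecMSD d pick S t r) <= cost d P.
Proof.
have [d0 _ d_triangle] := d_metric; have dxx x : d x x = 0 by apply/d0.
elim: t S r P => [|t IH] S r P /andP[r0 rt] clP; first by move: (leq_trans r0 rt).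
have [base | ] := boolP ((t == 0) || (#|S| == 1)).
  rewrite detRecMSD_base // cost_set1.
  case/orP: base => [/eqP t0 | /cards1P[p ->]]; last by rewrite diam_set1.
  have r1 : r = 1 by lia.
  by move: clP; rewrite r1; apply: diam_le_cost_clustering1.
rewrite negb_or => /andP[t0 S1].
have [diamP | costP] := leqP (diam d S) (cost d P).
  exact: leq_trans (cost_detRecMSD_le_diam _ _ _) diamP.
have S0 : S != set0 by apply: contraTneq costP => ->; rewrite diam_set0.
have [pickS [y yS dxy]] := pickP S S0.
have [R [i [j [[RS i0 j0 ijr] [P1 [P2 [cl1 cl2 costP12]]]]]]] :=
  split_clustering_by_ball d dxx d_triangle pickS yS dxy clP costP.
have ij : (i, j) \in split_pairs t by rewrite mem_split_pairs; lia.
rewrite -ijr; apply: leq_trans (cost_detRecMSD_le_split t0 S1 RS ij) _.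
apply: leq_trans (cost_setU _ _ _) (leq_trans _ costP12).
by apply: leq_add; [apply: IH cl1 | apply: IH cl2]; lia.
Qed.

End DetRecMSD.

Theorem lemma5 (F : realFieldType) (X : finType) (d : X -> X -> nat)
    (k : nat) (eps : F) (pick : {set X} -> X) :
  is_metric d ->
  (0 < k)%N -> (0 < eps)%R ->
  (forall x y : X, ((d x y)%:R <= 16%:R * k%:R / eps)%R) ->
  diam_endpoint_choice d pick ->
  forall (S : {set X}) (t : nat),
    S != set0 -> (1 <= t <= k)%N ->
    forall r : nat, (1 <= r <= t)%N ->
      cost d (detRecMSD d pick S t r) = opt d r S.
Proof.
move=> d_metric _ _ _ pickP S t _ _ r rt.
apply/esym/(opt_eq_cost d (andP rt).1 (detRecMSD_clustering rt)) => P.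
exact: (detRecMSD_minimal d_metric pickP P rt).
Qed.
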